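(* Let $D$ be any digraph and $P$ an admissible partition of $V(D)$. Then the map $\hat\varphi_P\colon|D|\to D/P$ is continuous.
   Context: Digraphs have no loops and no parallel edges. $\mathcal{X}(D)$: finite subsets of $V(D)$. A vertex set $Y$ separates vertex sets $A,B$ if every $A$–$B$ path meets $Y$ or every $B$–$A$ path meets $Y$. A finite partition $P$ of $V(D)$ is admissible if any two distinct classes are separated by a finite vertex set. $D/P$ is the finite multi-digraph on vertex set $P$ where for distinct $p_1,p_2\in P$ there is one edge $(e,p_1,p_2)$ for each edge $e$ of $D$ from $p_1$ to $p_2$ if there are finitely many such edges, and a single quotient edge $(p_1p_2,p_1,p_2)$ if there are infinitely many; $D/P$ carries the 1-complex topology (edges are copies of $[0,1]$ glued at endvertices; basic open sets are open stars around vertices and open subintervals of edges). Ends and limit edges: a ray is a one-way infinite directed path, its tails are its subrays; a ray is solid if for every $X\in\mathcal{X}(D)$ it has a tail in a strong component of $D-X$; solid rays are equivalent if for every $X$ they have tails in the same strong component of $D-X$; classes are ends, $\Omega(D)$. $C(X,\omega)$ is the strong component of $D-X$ containing tails of rays of $\omega$ ($\omega$ lives in it); $X$ separates ends $\omega,\eta$ if $C(X,\omega)\ne C(X,\eta)$. For distinct ends, $(\omega,\eta)$ is a limit edge if for every $X$ separating them $D$ has an edge from $C(X,\omega)$ to $C(X,\eta)$; for a vertex $v$, $(v,\omega)$ (resp. $(\omega,v)$) is a limit edge if $D$ has an edge from $v$ to $C(X,\omega)$ (resp. from $C(X,\omega)$ to $v$) for all $X$ with $v\notin C(X,\omega)$.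 $\Lambda(D)$: the limit edges. $|D|$: from $V(D)\cup\Omega(D)$ and copies $[0,1]_e$, $e\in E(D)\cup\Lambda(D)$, identify tail of $e$ with $0$ and head with $1$; points on different edges correspond if they come from the same real. A limit edge lives in a strong component $C$ of $D-X$ if each endpoint is a vertex of or an end living in $C$. Topology generated by: (1) open $\varepsilon$-stars around vertices $v$ ($[0,\varepsilon)$ of edges in $E(D)\cup\Lambda(D)$ with tail $v$, $(1-\varepsilon,1]$ of those with head $v$); (2) open subintervals of interiors of edges of $D$; (3) for an end $\omega$ and $X\in\mathcal{X}(D)$, $\hat C_\varepsilon(X,\omega)$: vertices and inner points of edges of $C(X,\omega)$, ends living in $C(X,\omega)$, points of limit edges living in $C(X,\omega)$, and for each edge of $E(D)\cup\Lambda(D)$ with exactly one endpoint $y$ a vertex of/end living in $C(X,\omega)$, the half-open segment of length $\varepsilon$ at $y$; (4) for an inner point $z$ of a limit edge $(\omega,\eta)$ and $X$ separating $\omega,\eta$: union of open $\varepsilon$-intervals around points corresponding to $z$ on all edges of $D$ from $C(X,\omega)$ to $C(X,\eta)$ and on limit edges with tail a vertex of/end living in $C(X,\omega)$ and head a vertex of/end living in $C(X,\eta)$; for $(v,\omega)$ with $v\in X$, analogously over edges of $D$ from $v$ to $C(X,\omega)$ and limit edges $(v,\omega')$ with $\omega'$ living in $C(X,\omega)$; symmetrically for $(\omega,v)$. $\hat\varphi_P\colon|D|\to D/P$: a vertex $v$ goes to its class; an inner point $z$ of an edge $vw$ of $D$ goes to the class of $v$ if $v,w$ lie in the same class, else to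 the corresponding point of the edge of $D/P$ from the class of $v$ to the class of $w$ (the copy of $vw$ or the quotient edge); an end $\omega$ goes to the unique class containing tails of all rays of $\omega$; an inner point $z$ of a limit edge $\lambda$ goes to the common image of the endpoints of $\lambda$ if these coincide, and otherwise (then $D$ has infinitely many edges between the two classes in the direction of $\lambda$, so $D/P$ has a quotient edge between them) to the corresponding point of that quotient edge. *)

From Stdlib Require Import Reals List Relations.
Import ListNotations.
Open Scope R_scope.



Definition gen_open {T : Type} (B : (T -> Prop) -> Prop) (U : T -> Prop) : Prop :=
  forall x, U x ->
    exists l : list (T -> Prop),
      Forall B l /\ Forall (fun S => S x) l /\
      (forall y, Forall (fun S => S y) l -> U y).

Definition continuous_wrt {T1 T2 : Type} (B1 : (T1 -> Prop) -> Prop)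
  (B2 : (T2 -> Prop) -> Prop) (f : T1 -> T2) : Prop :=
  forall U, gen_open B2 U -> gen_open B1 (fun x => U (f x)).

Section Digraph.
Context {V : Type} (adj : V -> V -> Prop).

(* finite vertex sets are lists *)
Definition reach_avoid (X : list V) : V -> V -> Prop :=
  clos_refl_trans V (fun a b => adj a b /\ ~ In a X /\ ~ In b X).

Definition sc (X : list V) (u v : V) : Prop :=
  ~ In u X /\ ~ In v X /\ reach_avoid X u v /\ reach_avoid X v u.

Definition is_ray (r : nat -> V) : Prop :=
  (forall m n, r m = r n -> m = n) /\ (forall n, adj (r n) (r (S n))).

Definition has_tail_in (r : nat -> V) (C : V -> Prop) : Prop :=
  exists N, forall n, (N <= n)%nat -> C (r n).

Definition solid (r : nat -> V) : Prop :=
  is_ray r /\ forall X : list V, exists u, ~ In u X /\ has_tail_in r (sc X u).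

Definition ray_equiv (r1 r2 : nat -> V) : Prop :=
  forall X : list V, exists u, ~ In u X /\
    has_tail_in r1 (sc X u) /\ has_tail_in r2 (sc X u).

(* an end = an equivalence class of solid rays *)
Definition is_end (w : (nat -> V) -> Prop) : Prop :=
  exists r, solid r /\ forall r', w r' <-> (solid r' /\ ray_equiv r r').

Definition DEnd : Type := { w : (nat -> V) -> Prop | is_end w }.

(* v is a vertex of C(X, w) *)
Definition compE (X : list V) (w : DEnd) (v : V) : Prop :=
  exists r, proj1_sig w r /\ has_tail_in r (fun x => sc X x v).

Definition same_comp (X : list V) (w1 w2 : DEnd) : Prop :=
  forall v, compE X w1 v <-> compE X w2 v.

Definition separates_ends (X : list V) (w h : DEnd) : Prop :=
  ~ same_comp X w h.

Definition limEE (w h : DEnd) : Prop :=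
  w <> h /\ forall X, separates_ends X w h ->
    exists u v, adj u v /\ compE X w u /\ compE X h v.
Definition limVE (v : V) (w : DEnd) : Prop :=
  forall X, ~ compE X w v -> exists u, adj v u /\ compE X w u.
Definition limEV (w : DEnd) (v : V) : Prop :=
  forall X, ~ compE X w v -> exists u, adj u v /\ compE X w u.

Inductive Node : Type := NV (v : V) | NE (w : DEnd).

Definition is_edge (a b : Node) : Prop :=
  match a, b with
  | NV u, NV v => adj u v
  | NE w, NE h => limEE w h
  | NV v, NE w => limVE v w
  | NE w, NV v => limEV w v
  end.

(* raw points of |D|: nodes, and inner points (a,b,t) of edges, 0<t<1 *)
Inductive RawPt : Type := PNode (n : Node) | PInner (a b : Node) (t : R).

Definition validPt (p : RawPt) : Prop :=
  match p with
  | PNode _ => True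
  | PInner a b t => is_edge a b /\ 0 < t < 1
  end.

Definition DPt : Type := { p : RawPt | validPt p }.

Definition node_in (X : list V) (w : DEnd) (n : Node) : Prop :=
  match n with
  | NV v => compE X w v
  | NE w' => same_comp X w' w
  end.

(* (1) open eps-stars around vertices *)
Definition star (v : V) (eps : R) (p : RawPt) : Prop :=
  p = PNode (NV v) \/
  exists a b t, p = PInner a b t /\
    ((a = NV v /\ t < eps) \/ (b = NV v /\ 1 - eps < t)).

(* (2) open subintervals of interiors of edges of D *)
Definition dinterval (u v : V) (lo hi : R) (p : RawPt) : Prop :=
  exists t, p = PInner (NV u) (NV v) t /\ lo < t < hi.

(* (3) \hat C_eps(X, w) *)
Definition Chat (X : list V) (w : DEnd) (eps : R) (p : RawPt) : Prop :=
  (exists n, p = PNode n /\ node_in X w n) \/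
  exists a b t, p = PInner a b t /\
    ((node_in X w a /\ node_in X w b) \/
     (node_in X w a /\ ~ node_in X w b /\ t < eps) \/
     (~ node_in X w a /\ node_in X w b /\ 1 - eps < t)).

(* (4) neighbourhoods of inner points of limit edges *)
Definition nbhdEE (X : list V) (w h : DEnd) (t0 eps : R) (p : RawPt) : Prop :=
  exists a b t, p = PInner a b t /\ node_in X w a /\ node_in X h b /\
    Rabs (t - t0) < eps.
Definition nbhdVE (X : list V) (v : V) (w : DEnd) (t0 eps : R) (p : RawPt) : Prop :=
  exists b t, p = PInner (NV v) b t /\ node_in X w b /\ Rabs (t - t0) < eps.
Definition nbhdEV (X : list V) (w : DEnd) (v : V) (t0 eps : R) (p : RawPt) : Prop :=
  exists a t, p = PInner a (NV v) t /\ node_in X w a /\ Rabs (t - t0) < eps.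

Definition basicRaw (S : RawPt -> Prop) : Prop :=
  (exists v eps, 0 < eps /\ forall p, S p <-> star v eps p) \/
  (exists u v lo hi, adj u v /\ 0 <= lo /\ lo < hi /\ hi <= 1 /\
      forall p, S p <-> dinterval u v lo hi p) \/
  (exists X w eps, 0 < eps /\ forall p, S p <-> Chat X w eps p) \/
  (exists X w h t0 eps, limEE w h /\ separates_ends X w h /\ 0 < t0 < 1 /\
      0 < eps /\ forall p, S p <-> nbhdEE X w h t0 eps p) \/
  (exists X v w t0 eps, limVE v w /\ In v X /\ 0 < t0 < 1 /\
      0 < eps /\ forall p, S p <-> nbhdVE X v w t0 eps p) \/
  (exists X w v t0 eps, limEV w v /\ In v X /\ 0 < t0 < 1 /\
      0 < eps /\ forall p, S p <-> nbhdEV X w v t0 eps p).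

Definition basicD (S : DPt -> Prop) : Prop :=
  exists S0, basicRaw S0 /\ forall p, S p <-> S0 (proj1_sig p).

Fixpoint chain (l : list V) : Prop :=
  match l with
  | x :: ((y :: _) as t) => adj x y /\ chain t
  | _ => True
  end.

Definition dpath (p : list V) : Prop := p <> [] /\ NoDup p /\ chain p.

Definition all_paths_meet (Y : list V) (A B : V -> Prop) : Prop :=
  forall p a b, dpath p -> hd_error p = Some a -> hd_error (rev p) = Some b ->
    A a -> B b -> exists y, In y p /\ In y Y.

Definition separates_sets (Y : list V) (A B : V -> Prop) : Prop :=
  all_paths_meet Y A B \/ all_paths_meet Y B A.

(* A finite partition P of V(D) is given by a finite index type K and a
   surjective labelling cls : V -> K; the classes are the fibres. *)
Context {K : Type} (cls : V -> K).

Definition finite_partition : Prop :=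
  (exists l : list K, forall k, In k l) /\ (forall k, exists v, cls v = k).

Definition admissible : Prop :=
  finite_partition /\
  forall k1 k2, k1 <> k2 ->
    exists X : list V, separates_sets X (fun v => cls v = k1) (fun v => cls v = k2).

Definition fin_between (k1 k2 : K) : Prop :=
  exists l : list (V * V), forall u v, adj u v -> cls u = k1 -> cls v = k2 ->
    In (u, v) l.

(* edges of D/P: copies of edges of D, or quotient edges *)
Inductive QEdge : Type := QCopy (u v : V) | QQuot (k1 k2 : K).

Definition qtail (e : QEdge) : K :=
  match e with QCopy u _ => cls u | QQuot k1 _ => k1 end.
Definition qhead (e : QEdge) : K :=
  match e with QCopy _ v => cls v | QQuot _ k2 => k2 end.

Definition qvalid_edge (e : QEdge) : Prop :=
  match e with
  | QCopy u v => adj u v /\ cls u <> cls v /\ fin_between (cls u) (cls v)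
  | QQuot k1 k2 => k1 <> k2 /\ ~ fin_between k1 k2
  end.

Inductive RawQ : Type := QNode (k : K) | QInner (e : QEdge) (t : R).

Definition validQ (q : RawQ) : Prop :=
  match q with
  | QNode _ => True
  | QInner e t => qvalid_edge e /\ 0 < t < 1
  end.

Definition QPt : Type := { q : RawQ | validQ q }.

Definition qstar (k : K) (eps : R) (q : RawQ) : Prop :=
  q = QNode k \/
  exists e t, q = QInner e t /\
    ((qtail e = k /\ t < eps) \/ (qhead e = k /\ 1 - eps < t)).

Definition qinterval (e : QEdge) (lo hi : R) (q : RawQ) : Prop :=
  exists t, q = QInner e t /\ lo < t < hi.

Definition basicQRaw (S : RawQ -> Prop) : Prop :=
  (exists k eps, 0 < eps /\ forall q, S q <-> qstar k eps q) \/
  (exists e lo hi, qvalid_edge e /\ 0 <= lo /\ lo < hi /\ hi <= 1 /\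
      forall q, S q <-> qinterval e lo hi q).

Definition basicQ (S : QPt -> Prop) : Prop :=
  exists S0, basicQRaw S0 /\ forall q, S q <-> S0 (proj1_sig q).

Definition node_class (n : Node) (k : K) : Prop :=
  match n with
  | NV v => cls v = k
  | NE w => forall r, proj1_sig w r -> has_tail_in r (fun x => cls x = k)
  end.

Definition phi_rel (p : RawPt) (q : RawQ) : Prop :=
  match p with
  | PNode n => exists k, node_class n k /\ q = QNode k
  | PInner a b t =>
      (exists u v, a = NV u /\ b = NV v /\
        ((cls u = cls v /\ q = QNode (cls u)) \/
         (cls u <> cls v /\ fin_between (cls u) (cls v) /\ q = QInner (QCopy u v) t) \/
         (cls u <> cls v /\ ~ fin_between (cls u) (cls v) /\
            q = QInner (QQuot (cls u) (cls v)) t)))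
      \/
      ((forall u v, ~ (a = NV u /\ b = NV v)) /\
       exists ka kb, node_class a ka /\ node_class b kb /\
         ((ka = kb /\ q = QNode ka) \/ (ka <> kb /\ q = QInner (QQuot ka kb) t)))
  end.

Definition is_phi (f : DPt -> QPt) : Prop :=
  forall p, phi_rel (proj1_sig p) (proj1_sig (f p)).

End Digraph.

From Stdlib Require Import Reals List Relations Classical ClassicalEpsilon
  ProofIrrelevance FunctionalExtensionality PropExtensionality Lra.
Import ListNotations.
Open Scope R_scope.

(* An admissible partition has finitely many classes, so a single finite set X0 separates
   any two of them.  Hence for X containing X0 every strong component of D - X lies in one
   class, every end has a class, and a limit edge between two different classes forces
   infinitely many edges of D between them.  Around a vertex or an end, the basic open sets
   (1) and (3) are therefore mapped into the open star of its class.  Around an inner point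
   of an edge, an interval (2), or a set (4) built from a finite X containing X0 and
   separating the endpoints, consists of points of edges between the same two classes at
   nearby positions, and all of them go to the same vertex or edge of D/P at nearby positions. *)

Lemma continuous_wrt_of_subbasic {T1 T2 : Type} (B1 : (T1 -> Prop) -> Prop)
  (B2 : (T2 -> Prop) -> Prop) (f : T1 -> T2) :
  (forall x S, B2 S -> S (f x) -> exists N, B1 N /\ N x /\ forall y, N y -> S (f y)) ->
  continuous_wrt B1 B2 f.
Proof.
  intros Hloc U HU x Hx.
  destruct (HU (f x) Hx) as [l (HlB & Hlx & HlU)].
  assert (Hnbhds : exists Ns, Forall B1 Ns /\ Forall (fun N => N x) Ns /\
    forall y, Forall (fun N => N y) Ns -> Forall (fun S => S (f y)) l).
  { clear HlU. induction l as [|S l IH].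
    - exists []; repeat split; auto.
    - inversion HlB as [|? ? HS HlB']; inversion Hlx as [|? ? HSx Hlx']; subst.
      destruct (Hloc x S HS HSx) as [N (HN & HNx & HNS)].
      destruct (IH HlB' Hlx') as [Ns (HNs & HNsx & HNsS)].
      exists (N :: Ns); repeat split; auto.
      intros y Hy; inversion Hy; subst; auto. }
  destruct Hnbhds as [Ns (HNs & HNsx & HNsS)].
  exists Ns; repeat split; auto.
Qed.

Lemma hd_error_app {A} (l1 l2 : list A) : l1 <> [] -> hd_error (l1 ++ l2) = hd_error l1.
Proof. destruct l1; simpl; congruence. Qed.

Lemma hd_error_rev_cons {A} (x : A) l :
  l <> [] -> hd_error (rev (x :: l)) = hd_error (rev l).
Proof.
  intros Hl; simpl; apply hd_error_app.
  intro E; apply Hl; rewrite <- (rev_involutive l), E; reflexivity.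
Qed.

Lemma upward_closed_common_witness {A B : Type} (Q : A -> list B -> Prop) (L : list A) :
  (forall a Y Y', Q a Y -> incl Y Y' -> Q a Y') ->
  (forall a, In a L -> exists Y, Q a Y) -> exists Y, forall a, In a L -> Q a Y.
Proof.
  intros Hmono. induction L as [|a L IH]; intros HL.
  - exists []; intros a [].
  - destruct (HL a (or_introl eq_refl)) as [Ya Ha].
    destruct IH as [Y HY]; [intros; apply HL; right; auto|].
    exists (Ya ++ Y). intros b [<-|Hb]; eapply Hmono; eauto using incl_appl, incl_appr, incl_refl.
Qed.

Section Continuity.
Context {V : Type} (adj : V -> V -> Prop) {K : Type} (cls : V -> K).

Lemma sc_sym X u v : sc adj X u v -> sc adj X v u.
Proof. unfold sc; tauto. Qed.

Lemma sc_trans X u v w : sc adj X u v -> sc adj X v w -> sc adj X u w.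
Proof.
  intros (Hu & _ & Huv & Hvu) (_ & Hw & Hvw & Hwv).
  repeat split; auto; eapply rt_trans; eauto.
Qed.

Lemma reach_avoid_mono X X' u v :
  incl X X' -> reach_avoid adj X' u v -> reach_avoid adj X u v.
Proof.
  intros HX H. induction H as [a b (Hab & Ha & Hb)| |]; [|apply rt_refl|eapply rt_trans; eauto].
  apply rt_step; split; [exact Hab|split; intro; [apply Ha|apply Hb]; auto].
Qed.

Lemma sc_mono X X' u v : incl X X' -> sc adj X' u v -> sc adj X u v.
Proof.
  intros HX (Hu & Hv & Huv & Hvu).
  split; [|split; [|split]]; try (eapply reach_avoid_mono; eauto); intro; [apply Hu|apply Hv]; auto.
Qed.

Lemma chain_app_r l1 l2 : chain adj (l1 ++ l2) -> chain adj l2.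
Proof.
  induction l1 as [|a l1 IH]; simpl; auto.
  intros H; apply IH. destruct (l1 ++ l2); simpl in *; tauto.
Qed.

Lemma reach_avoid_dpath X x y : reach_avoid adj X x y -> ~ In y X ->
  exists p, dpath adj p /\ hd_error p = Some x /\ hd_error (rev p) = Some y /\
    forall z, In z p -> ~ In z X.
Proof.
  intros Hxy Hy. apply clos_rt_rt1n in Hxy.
  induction Hxy as [x|x z y (Hxz & Hx & Hz) _ IH].
  - exists [x]; repeat split; simpl; auto using NoDup_cons, NoDup_nil; [congruence|].
    intros z [<-|[]]; auto.
  - destruct (IH Hy) as [p ((Hne & Hnd & Hch) & Hh & Hl & Hp)].
    destruct (classic (In x p)) as [Hin|Hin].
    + destruct (in_split x p Hin) as [p1 [p2 ->]].
      exists (x :: p2); repeat split; try discriminate.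
      * eapply NoDup_app_remove_l; eauto.
      * eapply chain_app_r; eauto.
      * rewrite rev_app_distr, hd_error_app in Hl; auto.
        simpl; destruct (rev p2); discriminate.
      * intros; apply Hp, in_or_app; right; auto.
    + exists (x :: p); repeat split; try discriminate.
      * constructor; auto.
      * destruct p as [|z' p]; [discriminate|]. injection Hh as <-. simpl; auto.
      * rewrite hd_error_rev_cons; auto.
      * intros w [<-|Hw]; auto.
Qed.

Lemma all_paths_meet_mono Y Y' A B :
  incl Y Y' -> all_paths_meet adj Y A B -> all_paths_meet adj Y' A B.
Proof.
  intros HY H p a b Hp Ha Hb HA HB.
  destruct (H p a b Hp Ha Hb HA HB) as [y [Hyp HyY]]; eauto.
Qed.

Lemma separates_sets_mono Y Y' A B :
  incl Y Y' -> separates_sets adj Y A B -> separates_sets adj Y' A B.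
Proof. intros HY [H|H]; [left|right]; eapply all_paths_meet_mono; eauto. Qed.

Lemma reach_avoid_not_separated X Y (A B : V -> Prop) a b :
  incl Y X -> reach_avoid adj X a b -> ~ In b X -> A a -> B b ->
  ~ all_paths_meet adj Y A B.
Proof.
  intros HYX Hab Hb Ha HbB Hmeet.
  destruct (reach_avoid_dpath X a b Hab Hb) as [p (Hp & Hh & Hl & Havoid)].
  destruct (Hmeet p a b Hp Hh Hl Ha HbB) as [y [Hyp HyY]].
  exact (Havoid y Hyp (HYX y HyY)).
Qed.

Definition separates_classes (X0 : list V) : Prop :=
  forall k1 k2, k1 <> k2 ->
    separates_sets adj X0 (fun v => cls v = k1) (fun v => cls v = k2).

Lemma admissible_separates_classes :
  admissible adj cls -> exists X0, separates_classes X0.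
Proof.
  intros [[[lk Hlk] _] Hsep].
  destruct (upward_closed_common_witness
    (fun k Y => fst k <> snd k ->
       separates_sets adj Y (fun v => cls v = fst k) (fun v => cls v = snd k))
    (list_prod lk lk)) as [X0 HX0].
  - intros k Y Y' H HY Hne; eapply separates_sets_mono; eauto.
  - intros [k1 k2] _. destruct (classic (k1 = k2)) as [E|E].
    + exists []; simpl; tauto.
    + destruct (Hsep k1 k2 E) as [Y HY]; exists Y; auto.
  - exists X0; intros k1 k2 Hne. apply (HX0 (k1, k2)); auto using in_prod.
Qed.

Lemma has_tail_both r (A B : V -> Prop) :
  has_tail_in r A -> has_tail_in r B -> has_tail_in r (fun x => A x /\ B x).
Proof.
  intros [N1 H1] [N2 H2]. exists (Nat.max N1 N2). intros n Hn.
  split; [apply H1|apply H2]; eauto using Nat.max_lub_l, Nat.max_lub_r.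
Qed.

Lemma has_tail_some r (A : V -> Prop) : has_tail_in r A -> exists n, A (r n).
Proof. intros [N H]. exists N. apply H, le_n. Qed.

Lemma has_tail_mono r (A B : V -> Prop) :
  (forall x, A x -> B x) -> has_tail_in r A -> has_tail_in r B.
Proof. intros HAB [N H]; exists N; auto. Qed.

Lemma ray_equiv_sym r1 r2 : ray_equiv adj r1 r2 -> ray_equiv adj r2 r1.
Proof. intros H X; destruct (H X) as [u [Hu [H1 H2]]]; exists u; auto. Qed.

Lemma ray_equiv_trans r1 r2 r3 :
  ray_equiv adj r1 r2 -> ray_equiv adj r2 r3 -> ray_equiv adj r1 r3.
Proof.
  intros H12 H23 X.
  destruct (H12 X) as [u [Hu [T1 T2]]], (H23 X) as [u' [_ [T2' T3]]].
  destruct (has_tail_some _ _ (has_tail_both _ _ _ T2 T2')) as [n [Hn Hn']].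
  exists u; repeat split; auto.
  eapply has_tail_mono; [|exact T3]. intros x Hx.
  eapply sc_trans; [eapply sc_trans; [exact Hn|apply sc_sym; exact Hn']|exact Hx].
Qed.

Lemma end_ray (w : DEnd adj) : exists r, proj1_sig w r.
Proof.
  destruct w as [w Hend]; simpl; destruct Hend as [r [Hs Hw]]. exists r; apply Hw; split; auto.
  intro X; destruct (proj2 Hs X) as [u [Hu Ht]]; exists u; auto.
Qed.

Lemma end_ray_solid (w : DEnd adj) r : proj1_sig w r -> solid adj r.
Proof. destruct w as [w [r0 [Hs Hw]]]; simpl; intros Hr; apply Hw, Hr. Qed.

Lemma end_rays_equiv (w : DEnd adj) r r' :
  proj1_sig w r -> proj1_sig w r' -> ray_equiv adj r r'.
Proof.
  destruct w as [w [r0 [Hs Hw]]]; simpl; intros Hr Hr'.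
  apply Hw in Hr as [_ Hr], Hr' as [_ Hr'].
  eapply ray_equiv_trans; [apply ray_equiv_sym|]; eauto.
Qed.

Lemma end_eq_of_ray_equiv (w h : DEnd adj) r r' :
  proj1_sig w r -> proj1_sig h r' -> ray_equiv adj r r' -> w = h.
Proof.
  destruct w as [w Hew], h as [h Heh]; simpl; intros Hr Hr' Hrr'.
  apply subset_eq_compat.
  destruct Hew as [rw [_ Hw]], Heh as [rh [_ Hh]].
  assert (Hwh : ray_equiv adj rw rh).
  { apply Hw in Hr as [_ H1]; apply Hh in Hr' as [_ H2].
    eapply ray_equiv_trans; [exact H1|].
    eapply ray_equiv_trans; [exact Hrr'|apply ray_equiv_sym; exact H2]. }
  extensionality s; apply propositional_extensionality.
  rewrite Hw, Hh. split; intros [Hs Hes]; split; auto;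
    eapply ray_equiv_trans; eauto using ray_equiv_sym.
Qed.

Lemma compE_of_tail X (w : DEnd adj) r u :
  proj1_sig w r -> has_tail_in r (sc adj X u) -> compE adj X w u.
Proof. intros Hr Ht; exists r; split; auto; eapply has_tail_mono; [apply sc_sym|exact Ht]. Qed.

Lemma compE_nonempty X (w : DEnd adj) : exists u, compE adj X w u.
Proof.
  destruct (end_ray w) as [r Hr].
  destruct (proj2 (end_ray_solid w r Hr) X) as [u [_ Ht]].
  exists u; eapply compE_of_tail; eauto.
Qed.

Lemma compE_notin X w u : compE adj X w u -> ~ In u X.
Proof. intros [r [_ Ht]]. destruct (has_tail_some _ _ Ht) as [n Hn]. apply Hn. Qed.

Lemma compE_sc X w u v : compE adj X w u -> sc adj X u v -> compE adj X w v.
Proof.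
  intros [r [Hr Ht]] Huv; exists r; split; auto.
  eapply has_tail_mono; [|exact Ht]; intros x Hx; exact (sc_trans _ _ _ _ Hx Huv).
Qed.

Lemma compE_unique X w u v : compE adj X w u -> compE adj X w v -> sc adj X u v.
Proof.
  intros [r [Hr Ht]] [r' [Hr' Ht']].
  destruct (end_rays_equiv w r r' Hr Hr' X) as [z [_ [T T']]].
  destruct (has_tail_some _ _ (has_tail_both _ _ _ Ht T)) as [n [Hn Hzn]].
  destruct (has_tail_some _ _ (has_tail_both _ _ _ Ht' T')) as [m [Hm Hzm]].
  apply sc_sym in Hn, Hzn.
  eapply sc_trans; [exact Hn|]. eapply sc_trans; [exact Hzn|].
  eapply sc_trans; [exact Hzm|exact Hm].
Qed.

Lemma compE_mono X X' w u : incl X X' -> compE adj X' w u -> compE adj X w u.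
Proof.
  intros HX [r [Hr Ht]]; exists r; split; auto.
  eapply has_tail_mono; [|exact Ht]; intros x; apply sc_mono, HX.
Qed.

Lemma same_comp_refl X w : same_comp adj X w w.
Proof. intro; tauto. Qed.

Lemma separates_ends_mono X X' w h :
  incl X X' -> separates_ends adj X w h -> separates_ends adj X' w h.
Proof.
  intros HX Hsep Hsame; apply Hsep; intro v.
  destruct (compE_nonempty X' w) as [z Hw'].
  pose proof (compE_mono _ _ _ _ HX Hw') as Hw.
  pose proof (compE_mono _ _ _ _ HX (proj1 (Hsame z) Hw')) as Hh.
  split; intro H.
  - exact (compE_sc X h z v Hh (compE_unique X w z v Hw H)).
  - exact (compE_sc X w z v Hw (compE_unique X h z v Hh H)).
Qed.

Lemma distinct_ends_separated (w h : DEnd adj) :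
  w <> h -> exists X, separates_ends adj X w h.
Proof.
  intros Hne. apply NNPP; intro Hnone. apply Hne.
  destruct (end_ray w) as [rw Hrw], (end_ray h) as [rh Hrh].
  apply (end_eq_of_ray_equiv w h rw rh Hrw Hrh). intro X.
  assert (Hsame : same_comp adj X w h) by (apply NNPP; intro Hs; apply Hnone; eauto).
  destruct (proj2 (end_ray_solid w rw Hrw) X) as [u [Hu Hrwu]].
  destruct (proj2 (end_ray_solid h rh Hrh) X) as [u' [_ Hrhu']].
  pose proof (compE_unique X h u u' (proj1 (Hsame u) (compE_of_tail X w rw u Hrw Hrwu))
    (compE_of_tail X h rh u' Hrh Hrhu')) as Huu'.
  exists u; repeat split; auto.
  eapply has_tail_mono; [|exact Hrhu']; intros x; apply sc_trans, Huu'.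
Qed.

Lemma node_class_unique n k1 k2 :
  node_class adj cls n k1 -> node_class adj cls n k2 -> k1 = k2.
Proof.
  destruct n as [v|w]; simpl; [congruence|]. intros H1 H2.
  destruct (end_ray w) as [r Hr].
  destruct (has_tail_some _ _ (has_tail_both _ _ _ (H1 r Hr) (H2 r Hr))) as [n [E1 E2]].
  congruence.
Qed.

Definition retime (q : @RawQ V K) (t : R) : @RawQ V K :=
  match q with QNode k => QNode k | QInner e _ => QInner e t end.

Lemma phi_node n rq k :
  phi_rel adj cls (PNode adj n) rq -> node_class adj cls n k -> rq = QNode k.
Proof. simpl. intros [k' [Hk' ->]] Hk. f_equal. eapply node_class_unique; eauto. Qed.

Lemma phi_inner_time a b t rq : phi_rel adj cls (PInner adj a b t) rq -> retime rq t = rq.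
Proof.
  simpl. intros [[u [v [_ [_ H]]]] | [_ [ka [kb [_ [_ H]]]]]].
  - destruct H as [[_ ->]|[[_ [_ ->]]|[_ [_ ->]]]]; reflexivity.
  - destruct H as [[_ ->]|[_ ->]]; reflexivity.
Qed.

Lemma phi_same a b t rq k : phi_rel adj cls (PInner adj a b t) rq ->
  node_class adj cls a k -> node_class adj cls b k -> rq = QNode k.
Proof.
  simpl. intros [[u [v [-> [-> H]]]] | [_ [ka [kb [Ha [Hb H]]]]]] H1 H2; simpl in H1, H2.
  - destruct H as [[_ ->]|[[Hne _]|[Hne _]]]; congruence.
  - rewrite (node_class_unique _ _ _ Ha H1), (node_class_unique _ _ _ Hb H2) in H.
    destruct H as [[_ ->]|[Hne _]]; congruence.
Qed.

Lemma phi_diff a b t rq k1 k2 : phi_rel adj cls (PInner adj a b t) rq ->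
  node_class adj cls a k1 -> node_class adj cls b k2 -> k1 <> k2 ->
  ~ fin_between adj cls k1 k2 -> rq = QInner (QQuot k1 k2) t.
Proof.
  simpl. intros [[u [v [-> [-> H]]]] | [_ [ka [kb [Ha [Hb H]]]]]] H1 H2 Hne Hnf;
    simpl in H1, H2.
  - subst. destruct H as [[E _]|[[_ [F _]]|[_ [_ ->]]]]; tauto.
  - rewrite (node_class_unique _ _ _ Ha H1), (node_class_unique _ _ _ Hb H2) in H.
    destruct H as [[E _]|[_ ->]]; tauto.
Qed.

Lemma phi_dedge_retime u v t t' rq rq' :
  phi_rel adj cls (PInner adj (NV adj u) (NV adj v) t) rq ->
  phi_rel adj cls (PInner adj (NV adj u) (NV adj v) t') rq' -> rq' = retime rq t'.
Proof.
  simpl; intros H H'.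
  destruct H as [[u1 [v1 [E1 [E2 H]]]] | [Hn _]]; [|exfalso; eapply Hn; split; reflexivity].
  destruct H' as [[u2 [v2 [F1 [F2 H']]]] | [Hn _]]; [|exfalso; eapply Hn; split; reflexivity].
  injection E1 as <-; injection E2 as <-; injection F1 as <-; injection F2 as <-.
  destruct H as [[E ->]|[[E [F ->]]|[E [F ->]]]],
    H' as [[E' ->]|[[E' [F' ->]]|[E' [F' ->]]]]; simpl; first [reflexivity|tauto].
Qed.

Lemma phi_classes_retime a b t a' b' t' ka kb rq rq' :
  phi_rel adj cls (PInner adj a b t) rq -> phi_rel adj cls (PInner adj a' b' t') rq' ->
  node_class adj cls a ka -> node_class adj cls b kb ->
  node_class adj cls a' ka -> node_class adj cls b' kb ->
  (ka <> kb -> ~ fin_between adj cls ka kb) -> rq' = retime rq t'.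
Proof.
  intros H H' Ha Hb Ha' Hb' Hfin. destruct (classic (ka = kb)) as [<-|Hne].
  - rewrite (phi_same _ _ _ _ _ H Ha Hb), (phi_same _ _ _ _ _ H' Ha' Hb'); reflexivity.
  - rewrite (phi_diff _ _ _ _ _ _ H Ha Hb Hne (Hfin Hne)),
      (phi_diff _ _ _ _ _ _ H' Ha' Hb' Hne (Hfin Hne)); reflexivity.
Qed.

Lemma phi_near_tail a b t eps rq k : phi_rel adj cls (PInner adj a b t) rq ->
  node_class adj cls a k -> t < eps -> qstar cls k eps rq.
Proof.
  simpl. intros [[u [v [-> [-> H]]]] | [_ [ka [kb [Ha [_ H]]]]]] Hk Ht; simpl in Hk.
  - subst k. destruct H as [[_ ->]|[[_ [_ ->]]|[_ [_ ->]]]]; [left; reflexivity|right..].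
    all: do 2 eexists; split; [reflexivity|left; split; [reflexivity|exact Ht]].
  - rewrite (node_class_unique _ _ _ Ha Hk) in H.
    destruct H as [[_ ->]|[_ ->]]; [left; reflexivity|right].
    do 2 eexists; split; [reflexivity|left; split; [reflexivity|exact Ht]].
Qed.

Lemma phi_near_head a b t eps rq k : phi_rel adj cls (PInner adj a b t) rq ->
  node_class adj cls b k -> 1 - eps < t -> qstar cls k eps rq.
Proof.
  simpl. intros [[u [v [-> [-> H]]]] | [_ [ka [kb [_ [Hb H]]]]]] Hk Ht; simpl in Hk.
  - subst k. destruct H as [[E ->]|[[_ [_ ->]]|[_ [_ ->]]]]; [left; congruence|right..].
    all: do 2 eexists; split; [reflexivity|right; split; [reflexivity|exact Ht]].
  - rewrite (node_class_unique _ _ _ Hb Hk) in H.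
    destruct H as [[-> ->]|[_ ->]]; [left; reflexivity|right].
    do 2 eexists; split; [reflexivity|right; split; [reflexivity|exact Ht]].
Qed.

Lemma basicRaw_star v eps : 0 < eps -> basicRaw adj (star adj v eps).
Proof. intros; left; exists v, eps; split; auto; reflexivity. Qed.

Lemma basicRaw_dinterval u v lo hi : adj u v -> 0 <= lo -> lo < hi -> hi <= 1 ->
  basicRaw adj (dinterval adj u v lo hi).
Proof. intros; right; left; exists u, v, lo, hi; repeat split; auto; reflexivity. Qed.

Lemma basicRaw_Chat X w eps : 0 < eps -> basicRaw adj (Chat adj X w eps).
Proof. intros; do 2 right; left; exists X, w, eps; split; auto; reflexivity. Qed.

Lemma basicRaw_nbhdEE X w h t0 eps : limEE adj w h -> separates_ends adj X w h ->
  0 < t0 < 1 -> 0 < eps -> basicRaw adj (nbhdEE adj X w h t0 eps).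
Proof.
  intros; do 3 right; left; exists X, w, h, t0, eps.
  do 4 (split; [assumption|]); reflexivity.
Qed.

Lemma basicRaw_nbhdVE X v w t0 eps : limVE adj v w -> In v X ->
  0 < t0 < 1 -> 0 < eps -> basicRaw adj (nbhdVE adj X v w t0 eps).
Proof.
  intros; do 4 right; left; exists X, v, w, t0, eps.
  do 4 (split; [assumption|]); reflexivity.
Qed.

Lemma basicRaw_nbhdEV X w v t0 eps : limEV adj w v -> In v X ->
  0 < t0 < 1 -> 0 < eps -> basicRaw adj (nbhdEV adj X w v t0 eps).
Proof.
  intros; do 5 right; exists X, w, v, t0, eps.
  do 4 (split; [assumption|]); reflexivity.
Qed.

Lemma basicQRaw_node S k : basicQRaw adj cls S -> S (QNode k) ->
  exists eps, 0 < eps /\ forall q, qstar cls k eps q -> S q.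
Proof.
  intros [[k' [eps [Heps HS]]]|[e [lo [hi (_ & _ & _ & _ & HS)]]]] Hk; apply HS in Hk.
  - destruct Hk as [E|[e [t [E _]]]]; [|discriminate]. injection E as <-.
    exists eps; split; auto; intros; apply HS; auto.
  - destruct Hk as [t [E _]]; discriminate.
Qed.

Lemma basicQRaw_retime S rq t : basicQRaw adj cls S -> S (retime rq t) ->
  exists d, 0 < d /\ forall t', Rabs (t' - t) < d -> S (retime rq t').
Proof.
  destruct rq as [k|e t0]; simpl; intros HS Ht; [exists 1; split; [lra|auto]|].
  destruct HS as [[k [eps [Heps HS]]]|[e' [lo [hi (_ & _ & _ & _ & HS)]]]]; apply HS in Ht.
  - destruct Ht as [E|[e' [t'' [E Hend]]]]; [discriminate|]. injection E as <- <-.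
    destruct Hend as [[Hk Ht]|[Hk Ht]].
    + exists (eps - t); split; [lra|]. intros t' Ht'. apply Rabs_def2 in Ht'.
      apply HS; right; exists e, t'; split; auto; left; split; auto; lra.
    + exists (t - (1 - eps)); split; [lra|]. intros t' Ht'. apply Rabs_def2 in Ht'.
      apply HS; right; exists e, t'; split; auto; right; split; auto; lra.
  - destruct Ht as [t'' [E Hr]]. injection E as <- <-.
    exists (Rmin (t - lo) (hi - t)); split; [apply Rmin_pos; lra|].
    intros t' Ht'. apply Rabs_def2 in Ht'.
    pose proof (Rmin_l (t - lo) (hi - t)). pose proof (Rmin_r (t - lo) (hi - t)).
    apply HS; exists t'; split; auto; lra.
Qed.

Definition nbhd_mapped_into (rp : RawPt adj) (G : @RawQ V K -> Prop) : Prop :=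
  exists N, basicRaw adj N /\ N rp /\
    forall ry rq, N ry -> phi_rel adj cls ry rq -> G rq.

Lemma nbhd_mapped_into_mono rp (G G' : @RawQ V K -> Prop) :
  (forall q, G q -> G' q) -> nbhd_mapped_into rp G -> nbhd_mapped_into rp G'.
Proof. intros HG [N (HN & Hp & Hmap)]; exists N; repeat split; eauto. Qed.

Definition retime_near (rq : @RawQ V K) (t d : R) (q : @RawQ V K) : Prop :=
  exists t', Rabs (t' - t) < d /\ q = retime rq t'.

Lemma vertex_star_mapped v eps :
  0 < eps -> nbhd_mapped_into (PNode adj (NV adj v)) (qstar cls (cls v) eps).
Proof.
  intros Heps. exists (star adj v eps).
  split; [apply basicRaw_star, Heps|split; [left; reflexivity|]].
  intros ry rq [->|[a [b [t [-> [[-> Ht]|[-> Ht]]]]]]] Hp.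
  - left; exact (phi_node _ _ _ Hp eq_refl).
  - exact (phi_near_tail _ _ _ _ _ _ Hp eq_refl Ht).
  - exact (phi_near_head _ _ _ _ _ _ Hp eq_refl Ht).
Qed.

Lemma dedge_interval_mapped u v t d rq : adj u v -> 0 < t < 1 -> 0 < d ->
  phi_rel adj cls (PInner adj (NV adj u) (NV adj v) t) rq ->
  nbhd_mapped_into (PInner adj (NV adj u) (NV adj v) t) (retime_near rq t d).
Proof.
  intros Huv Ht Hd Hphi.
  set (d' := Rmin d (Rmin t (1 - t))).
  assert (Hd' : 0 < d' /\ d' <= d /\ d' <= t /\ d' <= 1 - t).
  { pose proof (Rmin_l d (Rmin t (1 - t))). pose proof (Rmin_r d (Rmin t (1 - t))).
    pose proof (Rmin_l t (1 - t)). pose proof (Rmin_r t (1 - t)).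
    unfold d'; repeat split; try lra. repeat apply Rmin_pos; lra. }
  exists (dinterval adj u v (t - d') (t + d')).
  split; [apply basicRaw_dinterval; auto; lra|split; [exists t; split; auto; lra|]].
  intros ry rq' [t' [-> Ht']] Hphi'. exists t'; split; [apply Rabs_def1; lra|].
  exact (phi_dedge_retime _ _ _ _ _ _ Hphi Hphi').
Qed.

Section CommonSeparator.
Variable X0 : list V.
Hypothesis HX0 : separates_classes X0.

Lemma sc_same_class X x y : incl X0 X -> sc adj X x y -> cls x = cls y.
Proof.
  intros Hsub (Hx & Hy & Hxy & Hyx).
  apply NNPP; intro Hne. destruct (HX0 _ _ Hne) as [H|H].
  - exact (reach_avoid_not_separated X X0 _ _ x y Hsub Hxy Hy eq_refl eq_refl H).
  - exact (reach_avoid_not_separated X X0 _ _ y x Hsub Hyx Hx eq_refl eq_refl H).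
Qed.

Lemma end_has_class (w : DEnd adj) : exists k, node_class adj cls (NE adj w) k.
Proof.
  destruct (compE_nonempty X0 w) as [u0 Hu0]. exists (cls u0). intros r Hr.
  destruct (proj2 (end_ray_solid w r Hr) X0) as [u [_ Hu]].
  pose proof (sc_same_class _ _ _ (incl_refl X0)
    (compE_unique X0 w u0 u Hu0 (compE_of_tail X0 w r u Hr Hu))) as E.
  eapply has_tail_mono; [|exact Hu]; intros x Hx; simpl.
  rewrite E; symmetry; exact (sc_same_class _ _ _ (incl_refl X0) Hx).
Qed.

Lemma node_has_class (n : Node adj) : exists k, node_class adj cls n k.
Proof. destruct n as [v|w]; [exists (cls v); reflexivity|apply end_has_class]. Qed.

Lemma compE_class X w k u : incl X0 X ->
  node_class adj cls (NE adj w) k -> compE adj X w u -> cls u = k.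
Proof.
  intros Hsub Hk [r [Hr Ht]].
  destruct (has_tail_some _ _ (has_tail_both _ _ _ Ht (Hk r Hr))) as [n [Hn <-]].
  symmetry; eapply sc_same_class; eauto.
Qed.

Lemma node_in_class X w k n : incl X0 X ->
  node_class adj cls (NE adj w) k -> node_in adj X w n -> node_class adj cls n k.
Proof.
  intros Hsub Hk. destruct n as [u|w']; simpl; [eapply compE_class; eauto|].
  intros Hsame. destruct (compE_nonempty X w') as [x Hx].
  destruct (end_has_class w') as [k' Hk'].
  replace k with k'; [exact Hk'|].
  rewrite <- (compE_class X w' k' x), <- (compE_class X w k x); auto. apply Hsame, Hx.
Qed.

Lemma separates_ends_of_classes X w h k1 k2 : incl X0 X ->
  node_class adj cls (NE adj w) k1 -> node_class adj cls (NE adj h) k2 -> k1 <> k2 ->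
  separates_ends adj X w h.
Proof.
  intros Hsub H1 H2 Hne Hsame. destruct (compE_nonempty X w) as [x Hx].
  apply Hne. rewrite <- (compE_class X w k1 x), <- (compE_class X h k2 x); auto.
  apply Hsame, Hx.
Qed.

Lemma limit_edge_crossing X a b ka kb : incl X0 X -> is_edge adj a b ->
  (forall u v, ~ (a = NV adj u /\ b = NV adj v)) ->
  node_class adj cls a ka -> node_class adj cls b kb -> ka <> kb ->
  exists u v, adj u v /\ cls u = ka /\ cls v = kb /\ (~ In u X \/ ~ In v X).
Proof.
  intros Hsub He Hnv Ha Hb Hne.
  destruct a as [u0|w], b as [v0|h]; simpl in He, Ha, Hb.
  - exfalso; eapply Hnv; eauto.
  - subst ka. destruct (He X) as [v [Hv Hwv]].
    + intro Hw0; apply Hne; eapply compE_class; eauto.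
    + exists u0, v; repeat split; auto; [eapply compE_class|right; eapply compE_notin]; eauto.
  - subst kb. destruct (He X) as [u [Hu Hwu]].
    + intro Hw0; apply Hne; symmetry; eapply compE_class; eauto.
    + exists u, v0; repeat split; auto; [eapply compE_class|left; eapply compE_notin]; eauto.
  - destruct He as [_ He].
    destruct (He X) as [u [v (Huv & Hwu & Hhv)]]; [eapply separates_ends_of_classes; eauto|].
    exists u, v; repeat split; auto; [eapply compE_class..|left; eapply compE_notin]; eauto.
Qed.

(* Put the endpoints of the finitely many crossing edges into X: the limit edge still
   yields a crossing edge with an endpoint outside X. *)
Lemma limit_edge_infinite a b ka kb : is_edge adj a b ->
  (forall u v, ~ (a = NV adj u /\ b = NV adj v)) ->
  node_class adj cls a ka -> node_class adj cls b kb -> ka <> kb ->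
  ~ fin_between adj cls ka kb.
Proof.
  intros He Hnv Ha Hb Hne [l Hl].
  destruct (limit_edge_crossing (X0 ++ map fst l ++ map snd l) a b ka kb)
    as [u [v (Huv & Hu & Hv & Hout)]]; auto using incl_appl, incl_refl.
  pose proof (Hl u v Huv Hu Hv) as Hin.
  destruct Hout as [Hout|Hout]; apply Hout, in_or_app; right; apply in_or_app;
    [left; apply (in_map fst l (u, v))|right; apply (in_map snd l (u, v))]; exact Hin.
Qed.


Lemma end_Chat_mapped w k eps : node_class adj cls (NE adj w) k -> 0 < eps ->
  nbhd_mapped_into (PNode adj (NE adj w)) (qstar cls k eps).
Proof.
  intros Hk Heps. exists (Chat adj X0 w eps). split; [apply basicRaw_Chat, Heps|split].
  { left; exists (NE adj w); split; [reflexivity|apply same_comp_refl]. }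
  pose proof (fun n => node_in_class X0 w k n (incl_refl X0) Hk) as Hin.
  intros ry rq [[n [-> Hn]]|[a [b [t [-> H]]]]] Hp.
  - left; exact (phi_node _ _ _ Hp (Hin n Hn)).
  - destruct H as [[Ha Hb]|[[Ha [_ Ht]]|[_ [Hb Ht]]]].
    + left; exact (phi_same _ _ _ _ _ Hp (Hin a Ha) (Hin b Hb)).
    + exact (phi_near_tail _ _ _ _ _ _ Hp (Hin a Ha) Ht).
    + exact (phi_near_head _ _ _ _ _ _ Hp (Hin b Hb) Ht).
Qed.

Lemma limit_edge_class_nbhd a b t d ka kb : is_edge adj a b ->
  (forall u v, ~ (a = NV adj u /\ b = NV adj v)) -> 0 < t < 1 -> 0 < d ->
  node_class adj cls a ka -> node_class adj cls b kb ->
  exists N, basicRaw adj N /\ N (PInner adj a b t) /\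
    forall ry, N ry -> exists a' b' t', ry = PInner adj a' b' t' /\ Rabs (t' - t) < d /\
      node_class adj cls a' ka /\ node_class adj cls b' kb.
Proof.
  intros He Hnv Ht Hd Ha Hb.
  assert (Htt : Rabs (t - t) < d) by (rewrite Rminus_diag, Rabs_R0; exact Hd).
  destruct a as [u|w], b as [v|h]; simpl in He.
  - exfalso; eapply Hnv; eauto.
  - exists (nbhdVE adj (u :: X0) u h t d).
    split; [apply basicRaw_nbhdVE; simpl; auto|split].
    + exists (NE adj h), t; repeat split; auto using same_comp_refl.
    + intros ry [b' [t' [-> [Hb' Ht']]]]. exists (NV adj u), b', t'; repeat split; auto.
      exact (node_in_class _ h kb b' (incl_tl u (incl_refl X0)) Hb Hb').
  - exists (nbhdEV adj (v :: X0) w v t d).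
    split; [apply basicRaw_nbhdEV; simpl; auto|split].
    + exists (NE adj w), t; repeat split; auto using same_comp_refl.
    + intros ry [a' [t' [-> [Ha' Ht']]]]. exists a', (NV adj v), t'; repeat split; auto.
      exact (node_in_class _ w ka a' (incl_tl v (incl_refl X0)) Ha Ha').
  - destruct (distinct_ends_separated w h (proj1 He)) as [X HX].
    exists (nbhdEE adj (X ++ X0) w h t d). split.
    { apply basicRaw_nbhdEE; auto.
      exact (separates_ends_mono X _ w h (incl_appl X0 (incl_refl X)) HX). }
    split.
    + exists (NE adj w), (NE adj h), t; repeat split; auto using same_comp_refl.
    + intros ry [a' [b' [t' [-> (Ha' & Hb' & Ht')]]]]. exists a', b', t'.
      pose proof (incl_appr X (incl_refl X0)) as Hsub.
      repeat split; [exact Ht'|exact (node_in_class _ w ka a' Hsub Ha Ha')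
        |exact (node_in_class _ h kb b' Hsub Hb Hb')].
Qed.

Lemma limit_edge_mapped a b t d rq : is_edge adj a b ->
  (forall u v, ~ (a = NV adj u /\ b = NV adj v)) -> 0 < t < 1 -> 0 < d ->
  phi_rel adj cls (PInner adj a b t) rq ->
  nbhd_mapped_into (PInner adj a b t) (retime_near rq t d).
Proof.
  intros He Hnv Ht Hd Hphi.
  destruct (node_has_class a) as [ka Ha], (node_has_class b) as [kb Hb].
  destruct (limit_edge_class_nbhd a b t d ka kb He Hnv Ht Hd Ha Hb) as [N (HN & Hp & Hpts)].
  exists N; repeat split; auto.
  intros ry rq' Hry Hphi'. destruct (Hpts ry Hry) as [a' [b' [t' (-> & Ht' & Ha' & Hb')]]].
  exists t'; split; auto.
  exact (phi_classes_retime _ _ _ _ _ _ _ _ _ _ Hphi Hphi' Ha Hb Ha' Hb'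
    (limit_edge_infinite a b ka kb He Hnv Ha Hb)).
Qed.

Lemma phi_local rp rq S : validPt adj rp -> phi_rel adj cls rp rq ->
  basicQRaw adj cls S -> S rq -> nbhd_mapped_into rp S.
Proof.
  intros Hv Hphi HS Hrq. destruct rp as [[v|w]|a b t].
  - rewrite (phi_node _ _ (cls v) Hphi eq_refl) in Hrq.
    destruct (basicQRaw_node S (cls v) HS Hrq) as [eps [Heps Hsub]].
    exact (nbhd_mapped_into_mono _ _ _ Hsub (vertex_star_mapped v eps Heps)).
  - destruct (end_has_class w) as [k Hk]. rewrite (phi_node _ _ k Hphi Hk) in Hrq.
    destruct (basicQRaw_node S k HS Hrq) as [eps [Heps Hsub]].
    exact (nbhd_mapped_into_mono _ _ _ Hsub (end_Chat_mapped w k eps Hk Heps)).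
  - destruct Hv as [He Ht]. rewrite <- (phi_inner_time _ _ _ _ Hphi) in Hrq.
    destruct (basicQRaw_retime S rq t HS Hrq) as [d [Hd Hsub]].
    apply (nbhd_mapped_into_mono _ (retime_near rq t d)).
    { intros q [t' [Ht' ->]]; exact (Hsub t' Ht'). }
    destruct (classic (exists u v, a = NV adj u /\ b = NV adj v)) as [[u [v [-> ->]]]|Hnv].
    + exact (dedge_interval_mapped u v t d rq He Ht Hd Hphi).
    + apply limit_edge_mapped; auto. intros u v H; apply Hnv; eauto.
Qed.

Lemma phi_total rp : validPt adj rp -> exists rq, validQ adj cls rq /\ phi_rel adj cls rp rq.
Proof.
  intros Hv. destruct rp as [n|a b t].
  - destruct (node_has_class n) as [k Hk]. exists (QNode k); split; [exact I|exists k; auto].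
  - destruct Hv as [He Ht].
    destruct (classic (exists u v, a = NV adj u /\ b = NV adj v)) as [[u [v [-> ->]]]|Hnv].
    + simpl in He. destruct (classic (cls u = cls v)) as [E|E];
        [|destruct (classic (fin_between adj cls (cls u) (cls v))) as [F|F]].
      * exists (QNode (cls u)); split; [exact I|]. left; exists u, v; auto.
      * exists (QInner (QCopy u v) t); split; [simpl; tauto|left; exists u, v; auto 7].
      * exists (QInner (QQuot (cls u) (cls v)) t); split; [simpl; tauto|left; exists u, v; auto 8].
    + assert (Hnv' : forall u v, ~ (a = NV adj u /\ b = NV adj v))
        by (intros u v H; apply Hnv; eauto).
      destruct (node_has_class a) as [ka Ha], (node_has_class b) as [kb Hb].
      destruct (classic (ka = kb)) as [E|E].
      * exists (QNode ka); split; [exact I|]. right; split; auto. exists ka, kb; auto.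
      * exists (QInner (QQuot ka kb) t); split.
        -- split; [split; [exact E|eapply limit_edge_infinite; eauto]|exact Ht].
        -- right; split; auto. exists ka, kb; auto.
Qed.

End CommonSeparator.
End Continuity.

Theorem lemma4p2 (V : Type) (adj : V -> V -> Prop) (K : Type) (cls : V -> K)
  (Hloop : forall v, ~ adj v v)
  (Hadm : admissible adj cls) :
  (exists f : DPt adj -> QPt adj cls, is_phi adj cls f) /\
  (forall f : DPt adj -> QPt adj cls, is_phi adj cls f ->
     continuous_wrt (basicD adj) (basicQ adj cls) f).
Proof.
  destruct (admissible_separates_classes adj cls Hadm) as [X0 HX0]. split.
  - assert (Himg : forall p : DPt adj, exists q : QPt adj cls,
      phi_rel adj cls (proj1_sig p) (proj1_sig q)).
    { intros p. destruct (phi_total adj cls X0 HX0 _ (proj2_sig p)) as [rq [Hv Hphi]].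
      exists (exist _ rq Hv); exact Hphi. }
    exists (fun p => proj1_sig (constructive_indefinite_description _ (Himg p))).
    intros p. exact (proj2_sig (constructive_indefinite_description _ (Himg p))).
  - intros f Hf. apply continuous_wrt_of_subbasic. intros p S [S0 [HS0 HS]] Hp.
    apply HS in Hp.
    destruct (phi_local adj cls X0 HX0 _ _ _ (proj2_sig p) (Hf p) HS0 Hp) as [N (HN & Hpn & HNS)].
    exists (fun y => N (proj1_sig y)); split; [exists N; split; [exact HN|reflexivity]|split; auto].
    intros y Hy; apply HS, (HNS _ _ Hy (Hf y)).
Qed.
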